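(* For every tight intersection lattice $L$, we have $\bullet(\mathrm{nti}(L))=2^{\hat 1_L}$, i.e., every subset of $\hat 1_L$ belongs to $\bullet(\mathrm{nti}(L))$.
   Context: A finite family $\mathcal{F}$ of sets is non-trivial if it is non-empty and no $X\in\mathcal{F}$ satisfies $X=\bigcup\mathcal{F}$. For such $\mathcal{F}$ and non-empty $\mathcal{T}\subseteq\mathcal{F}$, let $S_{\mathcal{T}}=\bigcap\mathcal{T}$, and let $S_\emptyset=\bigcup\mathcal{F}$. The intersection lattice of $\mathcal{F}$ is $\mathbb{L}_{\mathcal{F}}=(\{S_{\mathcal{T}}\mid\mathcal{T}\subseteq\mathcal{F}\},\subseteq)$, with greatest element $\hat 1=\bigcup\mathcal{F}$; an intersection lattice is one of this form. For $L=\mathbb{L}_{\mathcal{F}}$ and $x\in\hat 1$, let $\min_L(x)=S_{\{X\in\mathcal{F}\mid x\in X\}}$. $L$ is tight if for every $U\in L$ with $U\neq\hat 1$ there is exactly one $x\in\hat 1$ with $\min_L(x)=U$. Let $\mathrm{nti}(L)=\{U\in L\mid U\neq\hat 1\}$. For sets $A,B$, $A\,\dot\cup\,B=A\cup B$ is defined only when $A\cap B=\emptyset$, and $A\,\dot\setminus\,B=A\setminus B$ is defined only when $B\subseteq A$. For a finite family $\mathcal{G}$ of sets, $\bullet(\mathcal{G})$ is the smallest family of sets containing $\emptyset$ and every member of $\mathcal{G}$ and closed under all well-defined disjoint unions and subset complements. *)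

From mathcomp Require Import all_boot.
From mathcomp Require Import boolp classical_sets cardinality.
Set Implicit Arguments. Unset Strict Implicit. Unset Printing Implicit Defensive.
Local Open Scope classical_set_scope.

Section IntersectionLattice.
Variable T : Type.

(* A finite family of sets is modelled as F : set (set T) with finite_set F. *)

Definition hat1 (F : set (set T)) : set T := \bigcup_(X in F) X.

Definition nontrivial (F : set (set T)) : Prop :=
  F !=set0 /\ forall X, F X -> X <> hat1 F.

Definition S_ (F : set (set T)) (Tf : set (set T)) : set T :=
  if `[< Tf = set0 >] then hat1 F else \bigcap_(X in Tf) X.

Definition Lset (F : set (set T)) : set (set T) :=
  [set U | exists Tf, Tf `<=` F /\ U = S_ F Tf].

Definition minL (F : set (set T)) (x : T) : set T :=
  S_ F [set X | F X /\ X x].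

Definition tight (F : set (set T)) : Prop :=
  forall U, Lset F U -> U <> hat1 F ->
    exists! x, hat1 F x /\ minL F x = U.

Definition nti (F : set (set T)) : set (set T) :=
  [set U | Lset F U /\ U <> hat1 F].

Inductive bullet (G : set (set T)) : set T -> Prop :=
| bullet0 : bullet G set0
| bulletG A : G A -> bullet G A
| bulletU A B : bullet G A -> bullet G B -> A `&` B = set0 -> bullet G (A `|` B)
| bulletD A B : bullet G A -> bullet G B -> B `<=` A -> bullet G (A `\` B).

End IntersectionLattice.

From mathcomp Require Import all_boot.
From mathcomp Require Import boolp classical_sets cardinality finmap.
Set Implicit Arguments. Unset Strict Implicit. Unset Printing Implicit Defensive.
Local Open Scope classical_set_scope.

(* By tightness, x |-> minL x is injective on hat1 F, with values in the finite
   family nti F; hence hat1 F is finite and it suffices to put every singleton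
   {x} into bullet (nti F), finite sets being disjoint unions of singletons.
   Every z in minL x other than x has minL z strictly contained in minL x, so by
   induction on minL x (finite sets ordered by strict inclusion) the singletons
   of minL x \ {x} are in bullet (nti F), hence so is minL x \ {x}; and since
   minL x is in nti F, so is {x} = minL x \ (minL x \ {x}). *)

Section FiniteSets.
Variable T : Type.

Lemma finite_set_proper_ind (P : set T -> Prop) :
  (forall A, finite_set A -> (forall B, B `<` A -> P B) -> P A) ->
  forall A, finite_set A -> P A.
Proof.
move: P; change T with {classic T} => P IH A fA.
suff : forall n B, finite_set B -> (#|` fset_set B| < n)%N -> P B.
  by apply=> //; exact: ltnSn.
elim=> // n IHn B fB; rewrite ltnS => cardB; apply: IH => // C [sCB nBC].
have fC := sub_finite_set sCB fB.
apply: (IHn _ fC (leq_trans _ cardB)); apply: fproper_ltn_card.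
rewrite fproperEneq; apply/andP; split; last by rewrite -(fset_set_sub fC fB).
by apply/negP => /eqP /(fset_set_inj fC fB) eqCB; apply: nBC; rewrite eqCB.
Qed.

Lemma finite_set_subsets (A : set T) :
  finite_set A -> finite_set [set B | B `<=` A].
Proof.
move: A; change T with {classic T} => A fA.
apply: (@sub_finite_set _ _ ((fun X => [set` X]) @` [set` fpowerset (fset_set A)])).
  move=> B BA; have fB := sub_finite_set BA fA.
  by exists (fset_set B); rewrite ?fset_setK //= fpowersetE -fset_set_sub.
exact/finite_image/finite_fset.
Qed.

End FiniteSets.

Section Bullet.
Variables (T : Type) (G : set (set T)).

Lemma bullet_sub (E : set T) :
  (forall A, G A -> A `<=` E) -> forall A, bullet G A -> A `<=` E.
Proof.
move=> GE A; elim=> {A} [|A /GE //|A B _ AE _ BE _|A B _ AE _ _ _] //.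
- by move=> y [/AE|/BE].
- by move=> y [/AE].
Qed.

Lemma bullet_finite (A : set T) :
  finite_set A -> (forall x, A x -> bullet G [set x]) -> bullet G A.
Proof.
move: A; apply: finite_set_proper_ind => A _ IH bullet_set1.
have [->|/set0P [x Ax]] := eqVneq A set0; first exact: bullet0.
rewrite -(setD1K Ax); apply: bulletU; first exact: bullet_set1.
- apply: IH => [|y [Ay _]]; last exact: bullet_set1.
  by split=> [y []//|/(_ x Ax) [_]]; apply.
- by rewrite setDIK.
Qed.

End Bullet.

Section IntersectionLatticeFacts.
Variables (T : Type) (F : set (set T)).

Lemma minLE x : hat1 F x -> minL F x = \bigcap_(X in [set X | F X /\ X x]) X.
Proof.
case=> X FX Xx; rewrite /minL /S_; case: asboolP => // E.
by have : [set X | F X /\ X x] X by []; rewrite E.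
Qed.

Lemma minL_notin_hat1 x : ~ hat1 F x -> minL F x = hat1 F.
Proof.
move=> hx; rewrite /minL /S_; case: asboolP => // /eqP/set0P [X [FX Xx]].
by case: hx; exists X.
Qed.

Lemma minL_id x : hat1 F x -> minL F x x.
Proof. by move=> hx; rewrite minLE // => X []. Qed.

Lemma Lset_minL x : Lset F (minL F x).
Proof. by exists [set X | F X /\ X x]; split=> // X []. Qed.

Lemma Lset_sub_hat1 U : Lset F U -> U `<=` hat1 F.
Proof.
case=> Tf [sTfF ->]; rewrite /S_; case: asboolP => [_ //|/eqP/set0P [X TfX]].
by move=> y Ty; exists X; [exact: sTfF | exact: Ty].
Qed.

Lemma minL_sub x z : hat1 F x -> minL F x z -> minL F z `<=` minL F x.
Proof.
move=> hx Uz; have hz := Lset_sub_hat1 (Lset_minL x) Uz.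
move: Uz; rewrite !minLE // => Uz y Uy X [FX Xx].
by apply: Uy; split=> //; exact: Uz.
Qed.

Lemma minL_neq_hat1 x : nontrivial F -> hat1 F x -> minL F x <> hat1 F.
Proof.
move=> [_ ntF] [X FX Xx] E; apply: (ntF X FX).
apply/seteqP; split=> [y Xy|y]; first by exists X.
by rewrite -E minLE //; [apply | exists X].
Qed.

Lemma preimage_minL_nti : nontrivial F -> minL F @^-1` nti F = hat1 F.
Proof.
move=> ntF; apply/seteqP; split=> x.
  by move=> [_]; apply: contra_notP => /minL_notin_hat1.
by move=> hx; split; [exact: Lset_minL | exact: minL_neq_hat1].
Qed.

Lemma Lset_finite : finite_set F -> finite_set (Lset F).
Proof.
move=> fF; apply: sub_finite_set (finite_image (S_ F) (finite_set_subsets fF)).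
by move=> U [Tf [sTfF ->]]; exists Tf.
Qed.

Hypotheses (ntF : nontrivial F) (tF : tight F).

Lemma minL_inj : {in hat1 F &, injective (minL F)}.
Proof.
move=> x z; rewrite !in_setE => hx hz E.
have [w [_ uw]] := tF (Lset_minL x) (minL_neq_hat1 ntF hx).
by rewrite -(uw x (conj hx erefl)) (uw z (conj hz (esym E))).
Qed.

Lemma minL_proper x z : hat1 F x -> minL F x z -> z <> x ->
  minL F z `<` minL F x.
Proof.
move=> hx Uz nzx; have hz := Lset_sub_hat1 (Lset_minL x) Uz.
split=> [|sUx]; first exact: minL_sub.
apply: nzx; apply: minL_inj; rewrite ?in_setE //.
by apply/seteqP; split=> //; exact: minL_sub.
Qed.

Lemma hat1_finite : finite_set F -> finite_set (hat1 F).
Proof.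
move=> fF; rewrite -preimage_minL_nti //; apply: finite_preimage.
  by rewrite preimage_minL_nti //; exact: minL_inj.
by apply: sub_finite_set (Lset_finite fF) => U [].
Qed.

Lemma bullet_nti_set1 x : finite_set F -> hat1 F x -> bullet (nti F) [set x].
Proof.
move=> fF hx; have fU : finite_set (minL F x).
  exact: sub_finite_set (Lset_sub_hat1 (Lset_minL x)) (hat1_finite fF).
suff minL_ind : forall U, finite_set U ->
    forall y, hat1 F y -> minL F y = U -> bullet (nti F) [set y].
  exact: minL_ind fU x hx erefl.
apply: finite_set_proper_ind => U finU IH {hx fU}{}x hx defU; subst U.
have -> : [set x] = minL F x `\` (minL F x `\ x).
  by rewrite setDD setIidr // => _ ->; exact: minL_id.
apply: bulletD => [||z []//].
  by apply: bulletG; split; [exact: Lset_minL | exact: minL_neq_hat1].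
apply: bullet_finite => [|z [Uz nzx]]; first exact: finite_setD finU.
have hz := Lset_sub_hat1 (Lset_minL x) Uz.
exact: IH (minL_proper hx Uz nzx) z hz erefl.
Qed.

End IntersectionLatticeFacts.

Theorem fact4p8 (T : Type) (F : set (set T)) :
  finite_set F -> nontrivial F -> tight F ->
  bullet (nti F) = [set A | A `<=` hat1 F].
Proof.
move=> fF ntF tF; apply/seteqP; split=> A /=.
  by apply: bullet_sub => U [/Lset_sub_hat1].
move=> sAH; apply: bullet_finite; first exact: sub_finite_set sAH (hat1_finite ntF tF fF).
by move=> x /sAH; exact: bullet_nti_set1.
Qed.
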